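(* Let $g\in\mathrm{PLA}$ with PLA coefficients $\hat g(n)$, $n\ge0$, and let $t\in\mathbb{T}$ be such that $g^*(t)=A<\infty$. Then the power series $G(z)=\sum_{n\ge0}\hat g(n)z^n$ converges for $|z|<1$ and $|G(z)|\le 3A$ for all $z\in Q_t$ with $|z|<1$.
   Context: $\mathrm{PLA}$ is the set of measurable $g$ on $\mathbb{T}=\mathbb{R}/2\pi\mathbb{Z}$ for which there exist complex numbers $c(n)$, $n\ge0$, with $\sum_{0\le n<N}c(n)e^{int}\to g(t)$ for a.e. $t$; these coefficients are unique and are denoted $\hat g(n)$. Define $g^*(t)=\sup_N\left|\sum_{0\le n<N}\hat g(n)e^{int}\right|$, $G(z)=\sum_{n\ge0}\hat g(n)z^n$, and the Privalov cone $Q_t=\mathrm{conv}\big(\{e^{it}\}\cup\{z\in\mathbb{C}:|z|<\tfrac12\}\big)$ (closed convex hull as a subset of the closed unit disc). *)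

From Stdlib Require Import Reals.
Open Scope R_scope.

Definition Cx : Type := (R * R)%type.
Definition Cre (z : Cx) : R := fst z.
Definition Cim (z : Cx) : R := snd z.
Definition C0 : Cx := (0, 0).
Definition C1 : Cx := (1, 0).
Definition Cadd (z w : Cx) : Cx := (fst z + fst w, snd z + snd w).
Definition Csub (z w : Cx) : Cx := (fst z - fst w, snd z - snd w).
Definition Cmul (z w : Cx) : Cx :=
  (fst z * fst w - snd z * snd w, fst z * snd w + snd z * fst w).
Definition Cscale (r : R) (z : Cx) : Cx := (r * fst z, r * snd z).
Definition Cnorm (z : Cx) : R := sqrt (fst z * fst z + snd z * snd z).
Fixpoint Cpow (z : Cx) (n : nat) : Cx :=
  match n with O => C1 | S m => Cmul (Cpow z m) z end.
Definition expi (t : R) : Cx := (cos t, sin t).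

Fixpoint psum (c : nat -> Cx) (z : Cx) (N : nat) : Cx :=
  match N with
  | O => C0
  | S M => Cadd (psum c z M) (Cmul (c M) (Cpow z M))
  end.

Definition Ccv (u : nat -> Cx) (L : Cx) : Prop :=
  forall eps : R, eps > 0 ->
    exists N0 : nat, forall N : nat, (N >= N0)%nat -> Cnorm (Csub (u N) L) < eps.

Definition null_set (E : R -> Prop) : Prop :=
  forall eps : R, eps > 0 ->
    exists a b : nat -> R,
      (forall n, a n <= b n) /\
      (forall x, E x -> exists n, a n < x < b n) /\
      (forall N, sum_f_R0 (fun n => b n - a n) N <= eps).

(** * PLA: c is the (unique) PLA coefficient sequence of g : T -> Cx.
    Functions on T = R/2piZ are modelled as 2pi-periodic functions on R. *)
Definition PLA_coeffs (g : R -> Cx) (c : nat -> Cx) : Prop :=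
  (forall t, g (t + 2 * PI) = g t) /\
  null_set (fun t => ~ Ccv (fun N => psum c (expi t) N) (g t)).

Definition maximal_fn_eq (c : nat -> Cx) (t A : R) : Prop :=
  is_lub (fun x => exists N : nat, x = Cnorm (psum c (expi t) N)) A.

Definition Cconvex (K : Cx -> Prop) : Prop :=
  forall x y lam, K x -> K y -> 0 <= lam <= 1 ->
    K (Cadd (Cscale (1 - lam) x) (Cscale lam y)).
Definition Cclosed (K : Cx -> Prop) : Prop :=
  forall z, (forall eps, eps > 0 -> exists w, K w /\ Cnorm (Csub w z) < eps) -> K z.
Definition closed_conv_hull (S : Cx -> Prop) (z : Cx) : Prop :=
  forall K : Cx -> Prop, Cconvex K -> Cclosed K -> (forall w, S w -> K w) -> K z.

Definition Privalov_cone (t : R) : Cx -> Prop :=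
  closed_conv_hull (fun w => w = expi t \/ Cnorm w < 1 / 2).

(** Let u = e^{it} and S_N = sum_{n<N} c(n) u^n, with |S_N| <= A for all N.

    - Since c(n) u^n = S_{n+1} - S_n and |u| = 1, we get |c(n)| <= 2A, so the
      power series sum c(n) z^n converges (absolutely) for |z| < 1.
    - Writing z = u w with |w| = |z| = r, Abel summation gives
        P_N(z) = S_N w^N + (1 - w) sum_{n<N} S_{n+1} w^n,
      hence |P_N(z)| <= A r^N + |u - z| A (1 - r^N) / (1 - r).
    - On the Privalov cone, |u - z| <= 3 (1 - |z|): the set
      { z | |u - z| + 3|z| <= 3 } is a closed convex set containing u and the
      disc |z| < 1/2, hence contains the closed convex hull Q_t.
    - Therefore |P_N(z)| <= 3A for every N, and the bound passes to the limit. *)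

From Stdlib Require Import Reals Lra Lia.
From Coquelicot Require Import Coquelicot.
From Pilot Require Import Defs.
Open Scope R_scope.

(** [Cadd], [Csub], [Cmul] coincide definitionally with [Cplus], [Cminus],
    [Cmult]; the norm, powers, scaling and partial sums need a rewrite. *)

Lemma Cnorm_Cmod (z : Cx) : Cnorm z = Cmod z.
Proof. unfold Cnorm, Cmod. f_equal. simpl. ring. Qed.

Lemma Cpow_Cpow (z : C) (n : nat) : Defs.Cpow z n = (z ^ n)%C.
Proof.
  induction n as [|n IHn]; simpl; [reflexivity|].
  rewrite IHn. apply Cmult_comm.
Qed.

Lemma Cscale_Cmult (r : R) (z : C) : Cscale r z = (RtoC r * z)%C.
Proof. destruct z as [x y]. unfold Cscale, RtoC, Cmult; simpl; f_equal; ring. Qed.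

Lemma psum_0 (c : nat -> C) (z : C) : psum c z 0 = RtoC 0.
Proof. reflexivity. Qed.

Lemma psum_S (c : nat -> C) (z : C) (N : nat) :
  psum c z (S N) = (psum c z N + c N * z ^ N)%C.
Proof. simpl. rewrite Cpow_Cpow. reflexivity. Qed.

Lemma Cmod_expi (t : R) : Cmod (expi t) = 1.
Proof.
  rewrite <- Cnorm_Cmod. unfold Cnorm, expi; simpl. rewrite <- sqrt_1. f_equal.
  pose proof (sin2_cos2 t) as Hsc. unfold Rsqr in Hsc. lra.
Qed.

Lemma Cpow_mult_distr (u w : C) (n : nat) : ((u * w) ^ n = u ^ n * w ^ n)%C.
Proof. induction n as [|n IHn]; simpl; [ring|]. rewrite IHn. ring. Qed.

Lemma Cmod_le_dist (x y : C) : Cmod x <= Cmod y + Cmod (y - x).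
Proof.
  replace x with (y + - (y - x))%C at 1 by ring.
  rewrite <- (Cmod_opp (y - x)). apply Cmod_triangle.
Qed.

Lemma Cmod_sub_le (x y : C) : Cmod (x - y) <= Cmod x + Cmod y.
Proof. rewrite <- (Cmod_opp y). apply Cmod_triangle. Qed.

Lemma Cmod_convex_comb (x y : C) (lam : R) : 0 <= lam <= 1 ->
  Cmod (RtoC (1 - lam) * x + RtoC lam * y) <= (1 - lam) * Cmod x + lam * Cmod y.
Proof.
  intros Hlam. eapply Rle_trans; [apply Cmod_triangle|].
  rewrite !Cmod_mult, !Cmod_R, !Rabs_pos_eq by lra. lra.
Qed.

Lemma psum_cv_of_bounded_coeffs (c : nat -> C) (z : C) (B : R) :
  (forall n, Cmod (c n) <= B) -> Cmod z < 1 -> exists L, Ccv (psum c z) L.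
Proof.
  intros Hc Hz.
  set (a := fun n => (c n * z ^ n)%C).
  assert (Hsum : forall N, psum c z (S N) = @sum_n C_AbelianMonoid a N).
  { induction N as [|N IHN].
    - rewrite sum_O. change (@eq C (psum c z 1) (a 0%nat)).
      rewrite psum_S, psum_0. unfold a. ring.
    - rewrite sum_Sn, psum_S, IHN. reflexivity. }
  assert (Hex : @ex_series _ C_CompleteNormedModule a).
  { apply (ex_series_le _ (fun n => B * Cmod z ^ n)).
    - intros n. change (Cmod (c n * z ^ n) <= B * Cmod z ^ n).
      rewrite Cmod_mult, Cmod_pow.
      apply Rmult_le_compat_r; [apply pow_le, Cmod_ge_0 | apply Hc].
    - assert (Hgeo : ex_series (fun n => Cmod z ^ n)).
      { apply ex_series_geom. rewrite Rabs_pos_eq by apply Cmod_ge_0. exact Hz. }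
      exact (ex_series_scal_l B _ Hgeo). }
  destruct Hex as [L HL]. exists L. intros eps Heps.
  destruct (proj1 (filterlim_locally_ball_norm _ _) HL (mkposreal eps Heps))
    as [N0 HN0].
  exists (S N0). intros [|N] HN; [lia|].
  rewrite Cnorm_Cmod, Hsum. apply (HN0 N). lia.
Qed.

Lemma Ccv_norm_le (u : nat -> C) (L : C) (B : R) :
  Ccv u L -> (forall N, Cmod (u N) <= B) -> Cmod L <= B.
Proof.
  intros Hcv Hu. destruct (Rle_lt_dec (Cmod L) B) as [Hle|Hlt]; [exact Hle|].
  destruct (Hcv (Cmod L - B)) as [N HN]; [lra|].
  specialize (HN N (le_n N)). rewrite Cnorm_Cmod in HN.
  pose proof (Cmod_le_dist L (u N)) as Htri.
  change (Csub (u N) L) with (u N - L)%C in HN.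
  specialize (Hu N). lra.
Qed.

Lemma coeff_bound (c : nat -> C) (u : C) (A : R) :
  Cmod u = 1 -> (forall N, Cmod (psum c u N) <= A) -> forall n, Cmod (c n) <= 2 * A.
Proof.
  intros Hu HA n.
  assert (Hterm : (c n * u ^ n)%C = (psum c u (S n) - psum c u n)%C)
    by (rewrite psum_S; ring).
  assert (Hnorm : Cmod (c n) = Cmod (psum c u (S n) - psum c u n)).
  { rewrite <- Hterm, Cmod_mult, Cmod_pow, Hu, pow1. ring. }
  pose proof (Cmod_sub_le (psum c u (S n)) (psum c u n)).
  pose proof (HA (S n)). pose proof (HA n). lra.
Qed.

Lemma abel_summation (c : nat -> C) (u w : C) (N : nat) :
  @eq C (psum c (u * w)%C N)
    (psum c u N * w ^ N + (1 - w) * psum (fun n => psum c u (S n)) w N)%C.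
Proof.
  induction N as [|N IHN].
  - rewrite !psum_0. simpl. ring.
  - rewrite !psum_S, IHN, Cpow_mult_distr. simpl. ring.
Qed.

(** Geometric bound for partial sums of a series with bounded coefficients,
    written without division so that it also holds on the unit circle. *)
Lemma psum_geometric_bound (d : nat -> C) (w : C) (B : R) (N : nat) :
  Cmod w <= 1 -> (forall n, Cmod (d n) <= B) ->
  (1 - Cmod w) * Cmod (psum d w N) <= B * (1 - Cmod w ^ N).
Proof.
  intros Hw Hd. induction N as [|N IHN].
  - rewrite psum_0, Cmod_0. simpl. lra.
  - rewrite psum_S. simpl.
    pose proof (Cmod_triangle (psum d w N) (d N * w ^ N)) as Htri.
    rewrite Cmod_mult, Cmod_pow in Htri.
    pose proof (pow_le (Cmod w) N (Cmod_ge_0 w)).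
    assert (Hlast : (1 - Cmod w) * (Cmod (d N) * Cmod w ^ N)
                    <= (1 - Cmod w) * (B * Cmod w ^ N)).
    { apply Rmult_le_compat_l; [lra|]. apply Rmult_le_compat_r; [lra | apply Hd]. }
    pose proof (Rmult_le_compat_l (1 - Cmod w) _ _ ltac:(lra) Htri).
    nra.
Qed.

Lemma partial_sum_bound_in_cone (c : nat -> C) (u z : C) (A : R) :
  Cmod u = 1 -> Cmod z < 1 -> (forall N, Cmod (psum c u N) <= A) ->
  Cmod (u - z) <= 3 * (1 - Cmod z) ->
  forall N, Cmod (psum c z N) <= 3 * A.
Proof.
  intros Hu Hz HA Hcone N.
  assert (Hu0 : u <> 0%C) by (apply Cmod_gt_0; lra).
  set (w := (z / u)%C).
  assert (Hzw : z = (u * w)%C) by (unfold w; field; exact Hu0).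
  assert (Hw : Cmod w = Cmod z) by (unfold w; rewrite Cmod_div, Hu by exact Hu0; field).
  assert (H1w : Cmod (1 - w) = Cmod (u - z)).
  { rewrite Hzw. replace (u - u * w)%C with (u * (1 - w))%C by ring.
    rewrite Cmod_mult, Hu. ring. }
  assert (HA0 : 0 <= A) by (pose proof (HA 0%nat); pose proof (Cmod_ge_0 (psum c u 0)); lra).
  pose proof (psum_geometric_bound (fun n => psum c u (S n)) w A N
                ltac:(lra) (fun n => HA (S n))) as Hgeo.
  rewrite Hzw, abel_summation.
  eapply Rle_trans; [apply Cmod_triangle|].
  rewrite !Cmod_mult, Cmod_pow, Hw, H1w. rewrite Hw in Hgeo.
  pose proof (HA N). pose proof (pow_le (Cmod z) N (Cmod_ge_0 z)).
  pose proof (Cmod_ge_0 (u - z)).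
  pose proof (Cmod_ge_0 (psum (fun n => psum c u (S n)) w N)).
  nra.
Qed.

Lemma sublevel_convex (f : Cx -> R) (M : R) :
  (forall x y lam, 0 <= lam <= 1 ->
     f (Cadd (Cscale (1 - lam) x) (Cscale lam y)) <= (1 - lam) * f x + lam * f y) ->
  Cconvex (fun z => f z <= M).
Proof. intros Hf x y lam Hx Hy Hlam. specialize (Hf x y lam Hlam). nra. Qed.

Lemma sublevel_closed (f : Cx -> R) (M L : R) : 0 <= L ->
  (forall z w, f z <= f w + L * Cnorm (Csub w z)) -> Cclosed (fun z => f z <= M).
Proof.
  intros HL Hf z Hz. destruct (Rle_lt_dec (f z) M) as [Hle|Hlt]; [exact Hle|].
  destruct (Hz ((f z - M) / (L + 1))) as [w [Hw Hwz]].
  { apply Rdiv_lt_0_compat; lra. }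
  specialize (Hf z w).
  assert (Hdist : (L + 1) * Cnorm (Csub w z) < f z - M).
  { apply Rmult_lt_reg_r with (/ (L + 1)); [apply Rinv_0_lt_compat; lra|].
    rewrite Rmult_comm, <- Rmult_assoc, Rinv_l by lra. lra. }
  assert (0 <= Cnorm (Csub w z)) by apply sqrt_pos.
  nra.
Qed.

(** The function whose sublevel set {<= 3} contains the cone Q_t. *)
Definition cone_gauge (u z : Cx) : R := Cmod (u - z)%C + 3 * Cmod z.

Lemma cone_gauge_convex (u x y : Cx) (lam : R) : 0 <= lam <= 1 ->
  cone_gauge u (Cadd (Cscale (1 - lam) x) (Cscale lam y))
  <= (1 - lam) * cone_gauge u x + lam * cone_gauge u y.
Proof.
  intros Hlam. unfold cone_gauge. rewrite !Cscale_Cmult.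
  change (Cadd ?a ?b) with (a + b)%C.
  replace (u - (RtoC (1 - lam) * x + RtoC lam * y))%C
    with (RtoC (1 - lam) * (u - x) + RtoC lam * (u - y))%C
    by (rewrite RtoC_minus; ring).
  pose proof (Cmod_convex_comb (u - x) (u - y) lam Hlam).
  pose proof (Cmod_convex_comb x y lam Hlam).
  lra.
Qed.

Lemma cone_gauge_lipschitz (u z w : Cx) :
  cone_gauge u z <= cone_gauge u w + 4 * Cnorm (Csub w z).
Proof.
  unfold cone_gauge. rewrite Cnorm_Cmod. change (Csub w z) with (w - z)%C.
  pose proof (Cmod_le_dist z w).
  pose proof (Cmod_triangle (u - w) (w - z)) as Htri.
  replace (u - w + (w - z))%C with (u - z)%C in Htri by ring.
  lra.
Qed.

Lemma Privalov_cone_dist (t : R) (z : Cx) :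
  Privalov_cone t z -> Cmod (expi t - z) <= 3 * (1 - Cmod z).
Proof.
  intros Hz.
  enough (Hg : cone_gauge (expi t) z <= 3) by (unfold cone_gauge in Hg; lra).
  apply (Hz (fun z => cone_gauge (expi t) z <= 3)).
  - apply sublevel_convex, cone_gauge_convex.
  - apply (sublevel_closed _ _ 4); [lra | apply cone_gauge_lipschitz].
  - intros w [Hw | Hw]; unfold cone_gauge.
    + subst w. replace (expi t - expi t)%C with (RtoC 0) by ring.
      rewrite Cmod_0, Cmod_expi. lra.
    + rewrite Cnorm_Cmod in Hw.
      pose proof (Cmod_sub_le (expi t) w). rewrite Cmod_expi in *. lra.
Qed.

Theorem lemma1 (g : R -> Cx) (c : nat -> Cx) (t A : R) :
  PLA_coeffs g c ->
  maximal_fn_eq c t A ->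
  forall z : Cx, Cnorm z < 1 ->
    exists Gz : Cx,
      Ccv (fun N => psum c z N) Gz /\
      (Privalov_cone t z -> Cnorm Gz <= 3 * A).
Proof.
  intros _ Hmax z Hz. rewrite Cnorm_Cmod in Hz.
  assert (HA : forall N, Cmod (psum c (expi t) N) <= A).
  { intros N. rewrite <- Cnorm_Cmod. apply (proj1 Hmax). exists N. reflexivity. }
  destruct (psum_cv_of_bounded_coeffs c z (2 * A)
              (coeff_bound c (expi t) A (Cmod_expi t) HA) Hz) as [L HL].
  exists L. split; [exact HL|].
  intros Hcone. rewrite Cnorm_Cmod.
  apply (Ccv_norm_le _ _ _ HL).
  exact (partial_sum_bound_in_cone c (expi t) z A (Cmod_expi t) Hz HA
           (Privalov_cone_dist t z Hcone)).
Qed.
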